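(* For every integer $n\ge 1$, \[ \sum_{k=0}^{n}\Big(-\frac{1}{4}\Big)^k\binom{n}{k}\binom{2k}{k}\,k^2H_{2k} =\frac{n^2}{4^n(2n-1)(2n-3)}\binom{2n}{n}\Big\{\frac{3}{2}H_n-2H_{2n}+\frac{8n^3-4n^2-10n+3}{n(2n-1)(2n-3)}\Big\}. \]
   Context: For an integer $m\ge 0$, $H_m$ denotes the $m$-th harmonic number: $H_0=0$ and $H_m=\sum_{j=1}^m \frac1j$ for $m\ge1$. $\binom{n}{k}$ is the usual binomial coefficient. *)

From HB Require Import structures.
From mathcomp Require Import all_boot all_order all_algebra.
Set Implicit Arguments. Unset Strict Implicit. Unset Printing Implicit Defensive.
Import Order.TTheory GRing.Theory Num.Theory.
Local Open Scope ring_scope.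

Definition harm (m : nat) : rat := \sum_(1 <= j < m.+1) (j%:R)^-1.

From HB Require Import structures.
From mathcomp Require Import all_boot all_order all_algebra.
From mathcomp Require Import ring lra zify.
Set Implicit Arguments. Unset Strict Implicit. Unset Printing Implicit Defensive.
Import Order.TTheory GRing.Theory Num.Theory.
Local Open Scope ring_scope.

(* Write c(n,k) = (-1/4)^k C(n,k) C(2k,k) and S(n) for the sum.  Creative
   telescoping in k, with the harmonic factor H_2k moved onto the certificate
   by summation by parts, gives
     2 n^2 S(n+1) - (n+1)(2n-3) S(n) = V(n+1),
     V(m) = sum_k c(m,k) k (k-1)^2 (4k-1) / (2k-1).
   V is a plain hypergeometric sum obeying a first-order recurrence, whence
   V(m) = - m (m-1) (m+5) / ((2m-1)(2m-5)) * C(2m,m) / 4^m.  The right-hand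
   side satisfies the recurrence of S and agrees with S at n = 1. *)

Lemma sumr_by_parts (R : pzRingType) (f g : nat -> R) (n : nat) :
  \sum_(0 <= k < n) (f k.+1 - f k) * g k =
  f n * g n - f 0%N * g 0%N - \sum_(0 <= k < n) f k.+1 * (g k.+1 - g k).
Proof.
rewrite -(telescope_sumr (fun k => f k * g k)) // -sumrB.
by apply: eq_bigr => k _; rewrite mulrBl mulrBr opprB [RHS]addrC addrA subrK.
Qed.

Lemma harmS m : harm m.+1 = harm m + (m%:R + 1)^-1.
Proof. by rewrite /harm big_nat_recr //= natr1. Qed.

Lemma mul_bin_central_succ k :
  ('C(2 * k.+1, k.+1) * k.+1 = 2 * (2 * k).+1 * 'C(2 * k, k))%N.
Proof.
rewrite !mul2n; have := mul_bin_diag (k.*2).+2 k; have := mul_bin_down (k.*2).+1 k.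
rewrite doubleS /= (_ : (k.*2).+1 - k = k.+1)%N; lia.
Qed.

Lemma bin_central_succ_ratio (F : numFieldType) k :
  'C(2 * k.+1, k.+1)%:R = 2 * (2 * k%:R + 1) * 'C(2 * k, k)%:R / (k%:R + 1) :> F.
Proof.
have k1_neq0 : k%:R + 1 != 0 :> F by rewrite natr1 pnatr_eq0.
have := mul_bin_central_succ k => /(congr1 (fun m => m%:R : F)).
rewrite !natrM -[k.+1%:R]natr1 -[(2 * k).+1%:R]natr1 natrM => eC.
by rewrite -eC mulfK.
Qed.

Lemma harm_double_succ m :
  harm (2 * m.+1) = harm (2 * m) + (2 * m%:R + 1)^-1 + (2 * m%:R + 2)^-1.
Proof.
rewrite (_ : 2 * m.+1 = (2 * m).+2)%N; last by lia.
by rewrite !harmS -[(2 * m).+1%:R]natr1 natrM; congr (_ + _^-1); ring.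
Qed.

Lemma double_sub_odd_neq0 (R : numDomainType) (k j : nat) (x : R) :
  x = 2 * k%:R - (2 * j%:R + 1) -> x != 0.
Proof.
move=> ->; rewrite -natrM -natrM natr1 subr_eq0 eqr_nat.
by apply/eqP; lia.
Qed.

(* The denominators left by [field] below are powers of 4, positive, or
   of the form 2k - (2j + 1). *)
Ltac side_neq0 k :=
  repeat (apply/andP; split);
  first [ by rewrite expf_neq0 | apply: lt0r_neq0; lra
        | apply: (@double_sub_odd_neq0 _ k 0); ring
        | apply: (@double_sub_odd_neq0 _ k 1); ring
        | apply: (@double_sub_odd_neq0 _ k 2); ring ].

Definition binw (n k : nat) : rat :=
  (- (1 / 4 : rat)) ^+ k * 'C(n, k)%:R * 'C(2 * k, k)%:R.

Lemma binw_small n k : (n < k)%N -> binw n k = 0.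
Proof. by move=> lt_nk; rewrite /binw bin_small // mulr0 mul0r. Qed.

Lemma binw_pred_n n k : (k <= n.+1)%N ->
  binw n k = binw n.+1 k * (n%:R + 1 - k%:R) / (n%:R + 1).
Proof.
move=> le_kn; have n1_neq0 : n%:R + 1 != 0 :> rat by rewrite natr1 pnatr_eq0.
have := mul_bin_down n.+1 k => /(congr1 (fun m => m%:R : rat)) /=.
rewrite !natrM natrB // -[n.+1%:R]natr1 => eC.
rewrite /binw; have -> : 'C(n, k)%:R = 'C(n.+1, k)%:R * (n%:R + 1 - k%:R) / (n%:R + 1) :> rat.
  by apply: (mulfI n1_neq0); rewrite eC; field.
by field.
Qed.

Lemma binw_succ_k n k : (k <= n)%N ->
  binw n k.+1 = - binw n k * (n%:R - k%:R) * (2 * k%:R + 1) / (2 * (k%:R + 1) ^+ 2).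
Proof.
move=> le_kn; have k1_neq0 : k%:R + 1 != 0 :> rat by rewrite natr1 pnatr_eq0.
have := mul_bin_left n k => /(congr1 (fun m => m%:R : rat)).
rewrite !natrM natrB // -[k.+1%:R]natr1 => eC.
rewrite /binw; have -> : 'C(n, k.+1)%:R = 'C(n, k)%:R * (n%:R - k%:R) / (k%:R + 1) :> rat.
  by apply: (mulfI k1_neq0); rewrite eC; field.
by rewrite bin_central_succ_ratio exprS; field.
Qed.

Definition hsum (n : nat) : rat :=
  \sum_(0 <= k < n.+1) binw n k * k%:R ^+ 2 * harm (2 * k).

Definition vterm (n k : nat) : rat :=
  binw n k * (k%:R * (k%:R - 1) ^+ 2 * (4 * k%:R - 1) / (2 * k%:R - 1)).

Lemma vterm_small n k : (n < k)%N -> vterm n k = 0.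
Proof. by move=> lt_nk; rewrite /vterm binw_small // mul0r. Qed.

Definition vsum (n : nat) : rat := \sum_(0 <= k < n.+1) vterm n k.

(* Zeilberger certificate for the sum with the factor H_2k dropped. *)
Definition hcert (n k : nat) : rat := -2 * k%:R ^+ 2 * (k%:R - 1) ^+ 2 * binw n.+1 k.

Lemma hcert_telescopes n k : (k <= n.+1)%N ->
  (2 * n%:R ^+ 2 * binw n.+1 k - (n%:R + 1) * (2 * n%:R - 3) * binw n k) * k%:R ^+ 2
  = hcert n k.+1 - hcert n k.
Proof.
move=> le_kn; have := ler0n rat n; have := ler0n rat k => k_ge0 n_ge0.
rewrite /hcert binw_succ_k // (binw_pred_n le_kn) -[n.+1%:R]natr1 -[k.+1%:R]natr1.
by field; side_neq0 k.
Qed.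

Lemma hcert_harm_jump n k :
  hcert n k.+1 * (harm (2 * k.+1) - harm (2 * k)) = - vterm n.+1 k.+1.
Proof.
have := ler0n rat k => k_ge0.
rewrite harm_double_succ /hcert /vterm -[k.+1%:R]natr1.
by field; side_neq0 k.
Qed.

Lemma hsum_rec n :
  2 * n%:R ^+ 2 * hsum n.+1 = vsum n.+1 + (n%:R + 1) * (2 * n%:R - 3) * hsum n.
Proof.
apply/eqP; rewrite -subr_eq; apply/eqP.
have hsum_ext : hsum n = \sum_(0 <= k < n.+2) binw n k * k%:R ^+ 2 * harm (2 * k).
  by rewrite [RHS]big_nat_recr //= binw_small // !mul0r addr0.
rewrite hsum_ext /hsum !mulr_sumr -sumrB.
transitivity (\sum_(0 <= k < n.+2) (hcert n k.+1 - hcert n k) * harm (2 * k)).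
  by apply: eq_big_nat => k /andP[_ lt_kn]; rewrite -hcert_telescopes //; ring.
have [hcert_0 vterm_0] : hcert n 0 = 0 /\ vterm n.+1 0 = 0.
  by split; rewrite /hcert /vterm; ring.
rewrite sumr_by_parts {1}/hcert binw_small // mulr0 hcert_0 !mul0r subrr sub0r.
under eq_bigr do rewrite hcert_harm_jump.
rewrite sumrN opprK /vsum [RHS]big_nat_recl // vterm_0 add0r.
by rewrite [LHS]big_nat_recr //= vterm_small // addr0.
Qed.

(* Zeilberger certificate for the first-order recurrence of [vsum]. *)
Definition vcert (m k : nat) : rat :=
  let x := m%:R in let y := k%:R in
  binw m.+1 k * y ^+ 2
  * ((8 - 152 * x - 80 * x ^+ 2) + (-116 + 648 * x + 224 * x ^+ 2) * y
     + (256 - 882 * x - 228 * x ^+ 2) * y ^+ 2 + (-196 + 474 * x + 100 * x ^+ 2) * y ^+ 3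
     + (48 - 88 * x - 16 * x ^+ 2) * y ^+ 4)
  / ((2 * y - 1) * (x + 1)).

Lemma vcert_telescopes m k : (k <= m.+1)%N ->
  2 * (m%:R - 1) * (m%:R + 5) * (2 * m%:R - 3) * vterm m.+1 k
  - (m%:R + 6) * (2 * m%:R - 1) * (2 * m%:R - 5) * vterm m k
  = vcert m k.+1 - vcert m k.
Proof.
move=> le_km; have := ler0n rat m; have := ler0n rat k => k_ge0 m_ge0.
rewrite /vcert binw_succ_k // /vterm (binw_pred_n le_km) -[m.+1%:R]natr1 -[k.+1%:R]natr1.
by field; side_neq0 k.
Qed.

Lemma vsum_rec m :
  2 * (m%:R - 1) * (m%:R + 5) * (2 * m%:R - 3) * vsum m.+1
  = (m%:R + 6) * (2 * m%:R - 1) * (2 * m%:R - 5) * vsum m.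
Proof.
have vsum_ext : vsum m = \sum_(0 <= k < m.+2) vterm m k.
  by rewrite [RHS]big_nat_recr //= vterm_small // addr0.
apply/eqP; rewrite -subr_eq0 vsum_ext /vsum !mulr_sumr -sumrB.
rewrite (@telescope_sumr_eq _ 0 m.+2 (vcert m)) //; last first.
  by move=> k /andP[_ lt_km]; exact: vcert_telescopes.
by rewrite /vcert binw_small //; apply/eqP; ring.
Qed.

Definition vclosed (m : nat) : rat :=
  - (m%:R * (m%:R - 1) * (m%:R + 5)) / ((2 * m%:R - 1) * (2 * m%:R - 5))
  * 'C(2 * m, m)%:R / 4 ^+ m.

Lemma vclosed_rec m :
  2 * (m%:R - 1) * (m%:R + 5) * (2 * m%:R - 3) * vclosed m.+1
  = (m%:R + 6) * (2 * m%:R - 1) * (2 * m%:R - 5) * vclosed m.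
Proof.
have := ler0n rat m => m_ge0.
rewrite /vclosed bin_central_succ_ratio exprS -[m.+1%:R]natr1.
by field; side_neq0 m.
Qed.

Lemma vsum_closed m : vsum m = vclosed m.
Proof.
(* The leading coefficient of [vsum_rec] vanishes at m = 1, so m = 2 is an
   initial value as well. *)
case: m => [|[|m]].
- by rewrite /vsum /vclosed big_nat1 /vterm; ring.
- by rewrite /vsum /vclosed !big_nat_recr //= big_geq // /vterm; ring.
elim: m => [|m IH].
  by rewrite /vsum /vclosed !big_nat_recr //= big_geq // /vterm /binw.
have m2_ge2 : 2 <= m.+2%:R :> rat by rewrite ler_nat.
have coef_neq0 :
    2 * (m.+2%:R - 1) * (m.+2%:R + 5) * (2 * m.+2%:R - 3) != 0 :> rat.
  by rewrite !mulf_neq0 //; apply: lt0r_neq0; lra.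
by apply: (mulfI coef_neq0); rewrite vsum_rec vclosed_rec IH.
Qed.

Definition hclosed (n : nat) : rat :=
  (n%:R ^+ 2 / (4 ^+ n * (2 * n%:R - 1) * (2 * n%:R - 3)))
      * ('C(2 * n, n))%:R
      * (3 / 2 * harm n - 2 * harm (2 * n)
         + (8 * n%:R ^+ 3 - 4 * n%:R ^+ 2 - 10 * n%:R + 3)
             / (n%:R * (2 * n%:R - 1) * (2 * n%:R - 3))).

Lemma hclosed_rec n : (0 < n)%N ->
  2 * n%:R ^+ 2 * hclosed n.+1 = vclosed n.+1 + (n%:R + 1) * (2 * n%:R - 3) * hclosed n.
Proof.
move=> n_gt0; have n_ge1 : 1 <= n%:R :> rat by rewrite ler1n.
rewrite /hclosed /vclosed harm_double_succ harmS bin_central_succ_ratio.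
rewrite [4 ^+ n.+1]exprS -[n.+1%:R]natr1.
by field; side_neq0 n.
Qed.

Lemma hsum_closed n : (0 < n)%N -> hsum n = hclosed n.
Proof.
case: n => [//|n] _; elim: n => [|n IH].
  by rewrite /hsum /hclosed !big_nat_recr //= big_geq // /binw !harmS /harm big_geq.
have coef_neq0 : 2 * n.+1%:R ^+ 2 != 0 :> rat.
  by rewrite mulf_neq0 // expf_neq0 // pnatr_eq0.
by apply: (mulfI coef_neq0); rewrite hsum_rec hclosed_rec // vsum_closed IH.
Qed.

Theorem theorem9 (n : nat) (hn : (1 <= n)%N) :
  \sum_(0 <= k < n.+1)
     (- (1 / 4 : rat)) ^+ k * ('C(n, k))%:R * ('C(2 * k, k))%:R
       * (k%:R) ^+ 2 * harm (2 * k)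
  = (n%:R ^+ 2 / (4 ^+ n * (2 * n%:R - 1) * (2 * n%:R - 3)))
      * ('C(2 * n, n))%:R
      * (3 / 2 * harm n - 2 * harm (2 * n)
         + (8 * n%:R ^+ 3 - 4 * n%:R ^+ 2 - 10 * n%:R + 3)
             / (n%:R * (2 * n%:R - 1) * (2 * n%:R - 3))).
Proof. exact: hsum_closed. Qed.
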